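(* Suppose $\hat q^{[k]}\in\Delta_\delta$ for all $k\ge1$. Then for every round $t\ge2$, all $s\in\mathcal S$, $a\in\mathcal A$, and every integer $l\ge0$, regardless of the history up to round $t-1$ (i.e. conditionally on any such history), $\Pr\big((s^t,a^t)\ne(s,a),\dots,(s^{t+l},a^{t+l})\ne(s,a)\big)\le(1-\alpha\delta)^{l+1}$.
   Context: $\mathcal S,\mathcal A$ finite; $P$ is a transition kernel with $P(s'|s,a)\ge\alpha>0$ for all $s,s',a$, and $s^{t+1}\sim P(\cdot|s^t,a^t)$. $\Delta$ is the set of $q\in\mathbb R_+^{\mathcal S\times\mathcal A\times\mathcal S}$ with $\sum_{s,a,s'}q(s,a,s')=1$ and $\sum_{s',a}q(s',a,s)=\sum_{a,s'}q(s,a,s')$ for all $s$; $\Delta_\delta=\{q\in\Delta:\sum_{s'}q(s,a,s')\ge\delta\ \forall s,a\}$ for $\delta\in(0,1)$; the policy induced by $q$ is $\pi^q(a|s)=\sum_{s'}q(s,a,s')/\sum_{a',s'}q(s,a',s')$. In algorithm IHMDP-VCG, time is divided into episodes $k=1,2,\dots$; in each round $t$ of episode $k$ the action is drawn as $a^t\sim\pi^{[k]}(\cdot|s^t)$ with $\pi^{[k]}=\pi^{\hat q^{[k]}}$, where $\hat q^{[k]}$ is determined by the history before episode $k$. *)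

From mathcomp Require Import all_boot all_order all_algebra.
Set Implicit Arguments. Unset Strict Implicit. Unset Printing Implicit Defensive.
Import Order.TTheory GRing.Theory Num.Theory.
Local Open Scope ring_scope.

Section Defs.
Variables (R : realFieldType) (S A : finType).

(* A transition kernel P(s'|s,a) is written  P s a s'. *)
Definition is_kernel (P : S -> A -> S -> R) : Prop :=
  (forall s a s', 0 <= P s a s') /\ (forall s a, \sum_(s' : S) P s a s' = 1).

Definition in_Delta (q : S -> A -> S -> R) : Prop :=
  (forall s a s', 0 <= q s a s') /\
  (\sum_(s : S) \sum_(a : A) \sum_(s' : S) q s a s' = 1) /\
  (forall s, \sum_(s' : S) \sum_(a : A) q s' a s = \sum_(a : A) \sum_(s' : S) q s a s').

Definition in_Delta_delta (delta : R) (q : S -> A -> S -> R) : Prop :=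
  in_Delta q /\ (forall s a, delta <= \sum_(s' : S) q s a s').

Definition pol_of (q : S -> A -> S -> R) (s : S) (a : A) : R :=
  (\sum_(s' : S) q s a s') / (\sum_(a' : A) \sum_(s' : S) q s a' s').

Definition next_state_prob (P : S -> A -> S -> R) (hist : seq (S * A)) (y : S) : R :=
  if rev hist is (x, u) :: _ then P x u y else 0.

(* Conditional probability, given the history hist = ((s^1,a^1),...,(s^{t-1},a^{t-1})),
   that the next rounds produce exactly the state-action pairs of the continuation c.
   pol hist y b = probability of action b at state y when the history before the
   current round is hist. *)
Fixpoint cont_prob (P : S -> A -> S -> R) (pol : seq (S * A) -> S -> A -> R)
    (hist : seq (S * A)) (c : seq (S * A)) : R :=
  match c with
  | [::] => 1
  | (y, b) :: c' => next_state_prob P hist y * pol hist y b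
                    * cont_prob P pol (rcons hist (y, b)) c'
  end.

(* Policy of IHMDP-VCG at the round following history hist (round number size hist + 1):
   a ~ pi^{[k]} with k = ep (round), pi^{[k]} = pi^{qhat k hist}. *)
Definition vcg_pol (ep : nat -> nat) (qhat : nat -> seq (S * A) -> S -> A -> S -> R)
    (hist : seq (S * A)) (y : S) (b : A) : R :=
  pol_of (qhat (ep (size hist).+1) hist) y b.

End Defs.

From mathcomp Require Import all_boot all_order all_algebra.
Import Order.TTheory GRing.Theory Num.Theory.
Local Open Scope ring_scope.
Set Implicit Arguments. Unset Strict Implicit.

(* From any non-empty history, the next pair (s^t, a^t) equals a fixed (s, a) with
   probability P(s | s^{t-1}, a^{t-1}) pi(a | s) >= alpha delta.
   Peeling off the first step of a continuation, the probability of avoiding (s, a)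
   for l + 1 rounds is at most (1 - alpha delta) times the worst such probability
   for l rounds, and the bound follows by induction on l. *)

Lemma big_tuple0 (R : Type) (idx : R) (op : Monoid.law idx) (T : finType)
    (F : 0.-tuple T -> R) :
  \big[op/idx]_(c : 0.-tuple T) F c = F [tuple].
Proof. by rewrite (big_pred1 [tuple]) // => c /=; apply/esym/eqP; exact: tuple0. Qed.

Lemma big_tupleS (R : Type) (idx : R) (op : Monoid.com_law idx) (T : finType) n
    (Q : pred ((n.+1).-tuple T)) (F : (n.+1).-tuple T -> R) :
  \big[op/idx]_(c : (n.+1).-tuple T | Q c) F c =
  \big[op/idx]_(x : T) \big[op/idx]_(t : n.-tuple T | Q [tuple of x :: t])
      F [tuple of x :: t].
Proof.
rewrite pair_big_dep /=.
rewrite (reindex (fun p : T * n.-tuple T => [tuple of p.1 :: p.2])) //=.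
exists (fun c : (n.+1).-tuple T => (thead c, [tuple of behead c])).
  by move=> [x t] _ /=; rewrite theadE; congr pair; exact: val_inj.
by move=> c _ /=; rewrite [RHS]tuple_eta.
Qed.

Section OccupancyPolicy.
Variables (R : realFieldType) (S A : finType).
Variables (q : S -> A -> S -> R) (delta : R).
Hypotheses (delta_gt0 : 0 < delta) (q_in : in_Delta_delta delta q).

Local Notation action_mass y b := (\sum_(s' : S) q y b s').
Local Notation state_mass y := (\sum_(a' : A) \sum_(s' : S) q y a' s').

Lemma action_mass_ge0 y b : 0 <= action_mass y b.
Proof. by case: q_in => -[q_ge0 _] _; apply: sumr_ge0. Qed.

Lemma action_mass_le_state_mass y b : action_mass y b <= state_mass y.
Proof.
by rewrite (bigD1 b) //= lerDl; apply: sumr_ge0 => b' _; exact: action_mass_ge0.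
Qed.

Lemma state_mass_gt0 y (b : A) : 0 < state_mass y.
Proof.
case: q_in => _ /(_ y b) mass_ge.
exact: lt_le_trans delta_gt0 (le_trans mass_ge (action_mass_le_state_mass y b)).
Qed.

Lemma state_mass_le1 y : state_mass y <= 1.
Proof.
case: q_in => -[q_ge0 [<- _]] _; rewrite (bigD1 y) //= lerDl.
by apply: sumr_ge0 => x _; apply: sumr_ge0 => b _; exact: action_mass_ge0.
Qed.

Lemma pol_of_ge y b : delta <= pol_of q y b.
Proof.
case: q_in => _ /(_ y b) /le_trans; apply.
rewrite /pol_of ler_pdivlMr; last exact: state_mass_gt0 y b.
by rewrite ler_piMr ?action_mass_ge0 ?state_mass_le1.
Qed.

Lemma pol_of_sum1 y (b0 : A) : \sum_(b : A) pol_of q y b = 1.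
Proof. by rewrite /pol_of -mulr_suml mulfV // gt_eqF ?(state_mass_gt0 y b0). Qed.

End OccupancyPolicy.

Section AvoidanceBound.
Variables (R : realFieldType) (S A : finType).
Variables (P : S -> A -> S -> R) (pol : seq (S * A) -> S -> A -> R) (alpha delta : R).
Hypotheses (P_kernel : is_kernel P) (alpha_ge0 : 0 <= alpha)
  (P_ge_alpha : forall s a s', alpha <= P s a s') (delta_ge0 : 0 <= delta)
  (pol_ge_delta : forall h y b, delta <= pol h y b)
  (pol_sum1 : forall h y, \sum_(b : A) pol h y b = 1).

Definition step_prob (h : seq (S * A)) (x : S * A) : R :=
  next_state_prob P h x.1 * pol h x.1 x.2.

Lemma next_state_prob_rcons h z y : next_state_prob P (rcons h z) y = P z.1 z.2 y.
Proof. by rewrite /next_state_prob rev_rcons; case: z. Qed.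

Lemma step_prob_ge0 h z x : 0 <= step_prob (rcons h z) x.
Proof.
rewrite /step_prob next_state_prob_rcons mulr_ge0 //.
- by case: P_kernel => P_ge0 _; exact: P_ge0.
- exact: le_trans delta_ge0 (pol_ge_delta _ _ _).
Qed.

Lemma step_prob_ge h z x : alpha * delta <= step_prob (rcons h z) x.
Proof. by rewrite /step_prob next_state_prob_rcons ler_pM. Qed.

Lemma step_prob_sum1 h z : \sum_(x : S * A) step_prob (rcons h z) x = 1.
Proof.
rewrite -(pair_bigA _ (fun y b => step_prob (rcons h z) (y, b))) /=.
under eq_bigr => y _ do rewrite /step_prob /= -mulr_sumr pol_sum1 mulr1.
by case: P_kernel => _; under eq_bigr do rewrite next_state_prob_rcons.
Qed.

Lemma step_prob_avoid_le h z x0 :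
  \sum_(x | x != x0) step_prob (rcons h z) x <= 1 - alpha * delta.
Proof.
have := step_prob_sum1 h z; rewrite (bigD1 x0) //= => /(canRL (addKr _)) ->.
by rewrite addrC lerD2l lerN2 step_prob_ge.
Qed.

Lemma avoid_prob_le n h z x0 :
  \sum_(c : n.-tuple (S * A) | all (fun x => x != x0) c) cont_prob P pol (rcons h z) c
  <= (1 - alpha * delta) ^+ n.
Proof.
have one_sub_ge0 : 0 <= 1 - alpha * delta.
  apply: le_trans (step_prob_avoid_le [::] x0 x0).
  by apply: sumr_ge0 => x _; exact: step_prob_ge0.
elim: n h z => [|n IHn] h z; first by rewrite big_mkcond big_tuple0 /= expr0.
rewrite big_tupleS /= exprS.
apply: le_trans (_ : \sum_(x | x != x0) step_prob (rcons h z) x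
                     * (1 - alpha * delta) ^+ n <= _); last first.
  by rewrite -mulr_suml ler_wpM2r ?exprn_ge0 ?step_prob_avoid_le.
rewrite [leRHS]big_mkcond; apply: ler_sum => x _.
case: (x != x0); last by rewrite big_pred0.
case: x => y b; rewrite -mulr_sumr.
by apply: ler_wpM2l; [exact: (step_prob_ge0 h z (y, b)) | exact: IHn].
Qed.

End AvoidanceBound.

Theorem lemma7 (R : realFieldType) (S A : finType)
  (P : S -> A -> S -> R) (alpha delta : R)
  (ep : nat -> nat) (qhat : nat -> seq (S * A) -> S -> A -> S -> R) :
  is_kernel P ->
  0 < alpha -> (forall s a s', alpha <= P s a s') ->
  0 < delta < 1 ->
  (forall tau, (1 <= ep tau)%N) ->
  (forall k hist, (1 <= k)%N -> in_Delta_delta delta (qhat k hist)) ->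
  forall (t : nat) (hist : seq (S * A)) (s : S) (a : A) (l : nat),
    (2 <= t)%N -> size hist = t.-1 ->
    \sum_(c : (l.+1).-tuple (S * A) | all (fun p => p != (s, a)) c)
        cont_prob P (vcg_pol ep qhat) hist c
    <= (1 - alpha * delta) ^+ l.+1.
Proof.
move=> P_kernel alpha_gt0 P_ge_alpha /andP[delta_gt0 _] ep_ge1 qhat_in
  t hist s a l t_ge2 size_hist.
have qhat_ep h : in_Delta_delta delta (qhat (ep (size h).+1) h) by exact: qhat_in _ _ (ep_ge1 _).
case/lastP: hist size_hist => [|h z] size_hist.
  by move: t_ge2 size_hist; case: t => [|[|]].
apply: (avoid_prob_le P_kernel (ltW alpha_gt0) P_ge_alpha (ltW delta_gt0)).
- by move=> h' y b; exact: pol_of_ge.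
- by move=> h' y; exact: pol_of_sum1 delta_gt0 (qhat_ep h') y a.
Qed.
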